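(* Let $q \geq 5$ be a prime power and let $\mathcal{X}$ be a plane curve of degree $q-1$ defined over $\mathbb{F}_q$ without $\mathbb{F}_q$-linear components with $\mathrm{N}_q(\mathcal{X}) = (q-1)^2$. Fix a point $Q_0 \in Z(\mathcal{X})$ and an $\mathbb{F}_q$-line $l_\infty$ not passing through $Q_0$. Suppose there are $\mathbb{F}_q$-lines $l_1, \dots, l_t$ through $Q_0$, with $2 \le t \le q-1$, such that $l_i(\mathbb{F}_q) \setminus (\{Q_0\} \cup l_\infty) \subseteq \mathcal{X}(\mathbb{F}_q)$ for $i=1,\dots,t$. Let $l$ be an $\mathbb{F}_q$-line through $Q_0$ different from $l_1,\dots,l_t$. If $\#\big((l \setminus l_\infty)(\mathbb{F}_q) \cap \mathcal{X}(\mathbb{F}_q)\big) \geq q - t$, then $l(\mathbb{F}_q) \setminus (\{Q_0\} \cup l_\infty(\mathbb{F}_q)) \subseteq \mathcal{X}(\mathbb{F}_q)$.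
   Context: $\mathcal{X}(\mathbb{F}_q)=\mathcal{X}\cap\mathbb{P}^2(\mathbb{F}_q)$, $\mathrm{N}_q(\mathcal{X})=\#\mathcal{X}(\mathbb{F}_q)$; ''without $\mathbb{F}_q$-linear components'' means no line defined over $\mathbb{F}_q$ is a component. $Z(\mathcal{X}) := \mathbb{P}^2(\mathbb{F}_q) \setminus \mathcal{X}(\mathbb{F}_q)$. For a line $l$, $l(\mathbb{F}_q)$ is its set of $\mathbb{F}_q$-rational points. *)

From HB Require Import structures.
From mathcomp Require Import all_boot all_order all_algebra all_field.
From mathcomp Require Import mpoly.
Set Implicit Arguments. Unset Strict Implicit. Unset Printing Implicit Defensive.
Import GRing.Theory.
Local Open Scope ring_scope.

(* Projective plane P^2(K) over a finite field K: a point (or a line, via its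
   coefficient vector) is represented by its unique normalized homogeneous
   coordinate vector (first nonzero coordinate equal to 1). *)
Definition normalized (K : fieldType) (P : {ffun 'I_3 -> K}) : bool :=
  [|| P ord0 == 1,
      (P ord0 == 0) && (P (inord 1) == 1)
    | [&& P ord0 == 0, P (inord 1) == 0 & P (inord 2) == 1]].

Definition onLine (K : fieldType) (L P : {ffun 'I_3 -> K}) : bool :=
  \sum_(i < 3) L i * P i == 0.

Definition linform (K : fieldType) (L : {ffun 'I_3 -> K}) : {mpoly K[3]} :=
  \sum_(i < 3) L i *: 'X_i.

Definition onCurve (K : fieldType) (F : {mpoly K[3]}) (P : {ffun 'I_3 -> K}) : bool :=
  F.@[P] == 0.

Definition plane_curve (K : fieldType) (d : nat) (F : {mpoly K[3]}) : Prop :=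
  F != 0 /\ F \is d.-homog.

Definition no_rational_linear_component (K : fieldType) (F : {mpoly K[3]}) : Prop :=
  forall L : {ffun 'I_3 -> K}, normalized L -> ~ (exists G, F = linform L * G).

Definition rat_points (K : finFieldType) (F : {mpoly K[3]}) : {set {ffun 'I_3 -> K}} :=
  [set P | normalized P && onCurve F P].

Definition Nq (K : finFieldType) (F : {mpoly K[3]}) : nat := #|rat_points F|.

From HB Require Import structures.
From mathcomp Require Import all_boot all_order all_algebra all_field.
From mathcomp Require Import mpoly.
From mathcomp Require Import ring zify.
Set Implicit Arguments. Unset Strict Implicit. Unset Printing Implicit Defensive.
Import GRing.Theory.
Local Open Scope ring_scope.

(* Use the affine chart (s, v) |-> Q0 + s dl + v d1 of the plane
   off l_inf, where dl and d1 are the points at infinity of l and l_1, and let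
   G(s, v) = F(Q0 + s dl + v d1) = sum_(a,b) p_ab s^a v^b, of degree < q.  In
   this chart each l_i is a line s = lam_i v through the origin, and since all
   of its q - 1 affine points other than Q0 lie on the curve, the polynomial
   G(lam_i v, v) = sum_j B_j(lam_i) v^j vanishes on K^*.  Hence B_j(lam_i) = 0
   for 0 < j < q - 1, where B_j(lam) = sum_(a <= j) p_(a,j-a) lam^a; as B_j has
   degree <= j < t and t distinct roots lam_i, B_j = 0 for 0 < j < t, so the
   restriction G(s, 0) to l has no monomials s^j with 0 < j < t.  Subtracting
   G(0, 0) (1 - s^(q-1)), which vanishes on K^*, leaves s^t times a polynomial
   of degree < q - t with at least q - t roots (the points of the curve on l),
   so G(s, 0) = G(0, 0) (1 - s^(q-1)) vanishes at every s <> 0. *)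

Section FiniteFieldPolynomials.
Variable K : finFieldType.
Local Notation q := #|K|.
Let q_gt1 : (1 < q)%N := finNzRing_gt1 K.

Lemma expf_card_pred (x : K) : x != 0 -> x ^+ q.-1 = 1.
Proof.
move=> x_neq0; apply: (mulfI x_neq0).
by rewrite -exprS (ltn_predK q_gt1) expf_card mulr1.
Qed.

Lemma size_sub_one_sub_Xpred (r : {poly K}) (c : K) :
  (size r <= q)%N -> (size (r - c *: (1 - 'X^(q.-1)))%R <= q)%N.
Proof.
move=> sr; rewrite (leq_trans (size_polyD _ _)) // size_polyN geq_max sr.
rewrite (leq_trans (size_scale_leq _ _)) // (leq_trans (size_polyD _ _)) //.
by rewrite size_polyN size_polyXn size_poly1 (ltn_predK q_gt1) geq_max leqnn andbT ltnW.
Qed.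

Lemma poly_roots_card_eq0 (r : {poly K}) (A : {set K}) :
  (size r <= #|A|)%N -> {in A, forall x, root r x} -> r = 0.
Proof.
move=> sr rA; apply: (@roots_geq_poly_eq0 _ _ (enum A)); last by rewrite -cardE.
  by apply/allP => x; rewrite mem_enum; apply: rA.
exact: enum_uniq.
Qed.

Lemma poly_vanishing_on_units (r : {poly K}) :
  (size r <= q)%N -> (forall x, x != 0 -> root r x) ->
  r = r`_0 *: (1 - 'X^(q.-1)).
Proof.
move=> sr r_units; apply/eqP; rewrite -subr_eq0; apply/eqP.
apply: (@poly_roots_card_eq0 _ [set: K]).
  by rewrite cardsT size_sub_one_sub_Xpred.
move=> x _; rewrite rootE !hornerE; have [->|x_neq0] := eqVneq x 0.
  by rewrite horner_coef0 expr0n -subn1 subn_eq0 leqNgt q_gt1 subr0 mulr1 subrr.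
by rewrite (rootP (r_units x x_neq0)) expf_card_pred // subrr mulr0 subrr.
Qed.

(* Writing r = r_0 (1 - X^(q-1)) + X^t D, the polynomial D has degree < q - t
   and vanishes at the nonzero roots of r, so it is zero. *)
Lemma lacunary_poly_vanishing_on_units (r : {poly K}) t :
  (t <= q.-1)%N -> (size r <= q)%N -> (forall j, (0 < j < t)%N -> r`_j = 0) ->
  (q - t <= #|[set s | (s != 0%R) && root r s]|)%N ->
  forall s, s != 0 -> root r s.
Proof.
move=> tq sr r_gap many_roots.
set S := [set s | _] in many_roots.
set E := r`_0 *: (1 - 'X^(q.-1)).
have E_units s : s != 0 -> E.[s] = 0.
  by move=> s_neq0; rewrite !hornerE expf_card_pred // subrr mulr0.
suff r_eq : r = E by move=> s s_neq0; rewrite rootE r_eq E_units.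
apply/eqP; rewrite -subr_eq0; apply/eqP.
set D := r - E.
have sD : (size D <= q)%N by apply: size_sub_one_sub_Xpred.
have D_low : take_poly t D = 0.
  apply/polyP => j; rewrite coef_take_poly coef0; case: ltnP => // jt.
  rewrite coefB coefZ coefB coef1 coefXn.
  have jq : (j < q.-1)%N by apply: leq_trans tq.
  have [j0|j_gt0] := posnP j.
    by rewrite j0 in jq *; rewrite (ltn_eqF jq) subr0 mulr1 subrr.
  by rewrite (r_gap j) ?j_gt0 // (ltn_eqF jq) subrr mulr0 subrr.
have D_eq : D = drop_poly t D * 'X^t by rewrite -{1}(poly_take_drop t D) D_low add0r.
rewrite D_eq (@poly_roots_card_eq0 (drop_poly t D) S) ?mul0r //.
  by rewrite size_drop_poly (leq_trans _ many_roots) // leq_sub2r.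
move=> s; rewrite inE => /andP[s_neq0 /rootP rs].
have : D.[s] = 0 by rewrite hornerD hornerN rs E_units // subrr.
rewrite {1}D_eq hornerM hornerXn => /eqP.
by rewrite mulf_eq0 expf_eq0 (negbTE s_neq0) andbF orbF.
Qed.

End FiniteFieldPolynomials.

Section LinesThroughTheOrigin.
Variable K : fieldType.
Implicit Types (p : nat -> nat -> K) (lam : K).

Definition homog_part p j : {poly K} := \poly_(a < j.+1) p a (j - a)%N.

Definition line_restriction p n lam : {poly K} :=
  \sum_(a < n) \sum_(b < n) (p a b * lam ^+ a) *: 'X^(a + b).

Lemma horner_line_restriction p n lam v :
  (line_restriction p n lam).[v] =
  \sum_(a < n) \sum_(b < n) p a b * (lam * v) ^+ a * v ^+ b.
Proof.
rewrite horner_sum; apply: eq_bigr => a _; rewrite horner_sum; apply: eq_bigr => b _.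
by rewrite hornerZ hornerXn exprMn exprD !mulrA.
Qed.

Lemma size_line_restriction p n lam :
  (forall a b, (n <= a + b)%N -> p a b = 0) ->
  (size (line_restriction p n lam) <= n)%N.
Proof.
move=> p_deg; rewrite (leq_trans (size_sum _ _ _)) //; apply/bigmax_leqP => a _.
rewrite (leq_trans (size_sum _ _ _)) //; apply/bigmax_leqP => b _.
have [ab_ge|ab_lt] := leqP n (a + b); first by rewrite p_deg // mul0r scale0r size_poly0.
by rewrite (leq_trans (size_scale_leq _ _)) // size_polyXn.
Qed.

Lemma coef_line_restriction p n lam j : (j < n)%N ->
  (line_restriction p n lam)`_j = (homog_part p j).[lam].
Proof.
move=> jn; rewrite coef_sum horner_poly.
rewrite (big_ord_widen n (fun a => p a (j - a)%N * lam ^+ a)) // [RHS]big_mkcond /=.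
apply: eq_bigr => a _; rewrite coef_sum.
transitivity (\sum_(b < n | b == (j - a)%N :> nat)
                 (if (a <= j)%N then p a b * lam ^+ a else 0)).
  rewrite [RHS]big_mkcond; apply: eq_bigr => b _; rewrite coefZ coefXn.
  have -> : (j == a + b)%N = (a <= j)%N && (b == j - a :> nat)%N.
    by apply/eqP/andP => [->|[? /eqP->]]; [rewrite leq_addr addKn | rewrite subnKC].
  by case: leqP => _; case: eqP => _; rewrite ?mulr1 ?mulr0.
rewrite (big_ord1_eq _ (fun b => if (a <= j)%N then p a b * lam ^+ a else 0)).
by rewrite (leq_ltn_trans (leq_subr a j) jn) ltnS; case: leqP.
Qed.

Lemma coef_homog_part p j : (homog_part p j)`_j = p j 0%N.
Proof. by rewrite coef_poly ltnSn subnn. Qed.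

Lemma size_homog_part p j : (size (homog_part p j) <= j.+1)%N.
Proof. exact: size_poly. Qed.

Lemma sum_mul_expr0 n (f : nat -> K) : (0 < n)%N -> \sum_(b < n) f b * 0 ^+ b = f 0%N.
Proof.
case: n => // n _; rewrite big_ord_recl expr0 mulr1 big1 ?addr0 // => b _.
by rewrite exprS mul0r mulr0.
Qed.

End LinesThroughTheOrigin.

Section FiniteFieldLines.
Variable K : finFieldType.
Local Notation q := #|K|.

(* Restricted to each line s = lam_i v, the polynomial has degree < q and
   vanishes on K^*, so its coefficients homog_part p j (lam i) vanish for
   0 < j < q - 1; a homog_part of degree j < t with t roots is zero. *)
Lemma low_coef_vanishing_on_lines (p : nat -> nat -> K) t (lam : 'I_t -> K) :
  (t <= q.-1)%N -> injective lam ->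
  (forall a b, (q <= a + b)%N -> p a b = 0) ->
  (forall i v, v != 0 ->
     \sum_(a < q) \sum_(b < q) p a b * (lam i * v) ^+ a * v ^+ b = 0) ->
  forall j, (0 < j < t)%N -> p j 0%N = 0.
Proof.
move=> tq lam_inj p_deg p_lines j /andP[j_gt0 jt].
have jq : (j < q.-1)%N := leq_trans jt tq.
rewrite -(coef_homog_part p j).
rewrite (@poly_roots_card_eq0 _ (homog_part p j) [set lam i | i : 'I_t]) ?coef0 //.
  by rewrite card_imset // card_ord (leq_trans (size_homog_part _ _)).
move=> _ /imsetP[i _ ->]; apply/rootP.
set r := line_restriction p q (lam i).
have r_units v : v != 0 -> root r v.
  by move=> /p_lines v_root; rewrite rootE horner_line_restriction v_root.
have := congr1 (fun r : {poly K} => r`_j)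
  (poly_vanishing_on_units (size_line_restriction _ p_deg) r_units).
rewrite /= coef_line_restriction ?(leq_trans jq (leq_pred _)) // => ->.
by rewrite coefZ coefB coef1 coefXn (gtn_eqF j_gt0) (ltn_eqF jq) subrr mulr0.
Qed.

Lemma axis_vanishing_of_lines (p : nat -> nat -> K) t (lam : 'I_t -> K) :
  (t <= q.-1)%N -> injective lam ->
  (forall a b, (q <= a + b)%N -> p a b = 0) ->
  (forall i v, v != 0 ->
     \sum_(a < q) \sum_(b < q) p a b * (lam i * v) ^+ a * v ^+ b = 0) ->
  (q - t <= #|[set s : K | (s != 0) && (\sum_(a < q) p a 0%N * s ^+ a == 0)]%R|)%N ->
  forall s, s != 0 -> \sum_(a < q) p a 0%N * s ^+ a = 0.
Proof.
move=> tq lam_inj p_deg p_lines many_roots s s_neq0.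
pose r : {poly K} := \poly_(a < q) p a 0%N.
have rE x : r.[x] = \sum_(a < q) p a 0%N * x ^+ a by rewrite horner_poly.
rewrite -rE; apply/rootP/(lacunary_poly_vanishing_on_units tq (size_poly _ _)) => //.
  move=> j /andP[j_gt0 jt]; rewrite coef_poly (leq_trans jt (leq_trans tq (leq_pred _))).
  by apply: (low_coef_vanishing_on_lines tq lam_inj p_deg p_lines); rewrite j_gt0.
apply: leq_trans many_roots (subset_leq_card _).
by apply/subsetP => x; rewrite !inE rootE rE.
Qed.

End FiniteFieldLines.

Section PlaneCoordinates.
Variable K : fieldType.
Local Notation vec := {ffun 'I_3 -> K}.

Definition i1 : 'I_3 := Ordinal (isT : (1 < 3)%N).
Definition i2 : 'I_3 := Ordinal (isT : (2 < 3)%N).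

Lemma ord3P (i : 'I_3) : [\/ i = ord0, i = i1 | i = i2].
Proof.
case: i => [[|[|[|k]]] hk]; last by [].
- by apply: Or31; apply/val_inj.
- by apply: Or32; apply/val_inj.
- by apply: Or33; apply/val_inj.
Qed.

Lemma sum3 (f : 'I_3 -> K) : \sum_(i < 3) f i = f ord0 + f i1 + f i2.
Proof.
by rewrite !big_ord_recr big_ord0 /= add0r; congr (f _ + f _ + f _); apply/val_inj.
Qed.

Definition vec3 (a b c : K) : vec :=
  [ffun i : 'I_3 => if i == ord0 then a else if i == i1 then b else c].

Definition scalev (a : K) (x : vec) : vec := [ffun i => a * x i].

Definition dot (x y : vec) : K := \sum_(i < 3) x i * y i.

Definition cross (x y : vec) : vec :=
  vec3 (x i1 * y i2 - x i2 * y i1) (x i2 * y ord0 - x ord0 * y i2)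
       (x ord0 * y i1 - x i1 * y ord0).

Definition det (x y z : vec) : K := dot (cross x y) z.

Lemma onLineE (L P : vec) : onLine L P = (dot L P == 0).
Proof. by []. Qed.

Lemma dotE (x y : vec) : dot x y = x ord0 * y ord0 + x i1 * y i1 + x i2 * y i2.
Proof. exact: sum3. Qed.

Lemma vec3_coords (x : vec) : vec3 (x ord0) (x i1) (x i2) = x.
Proof. by apply/ffunP => i; rewrite ffunE; case: (ord3P i) => ->. Qed.

End PlaneCoordinates.

Ltac vec_ring := rewrite /det /cross /scalev ?dotE ?ffunE /=; ring.

Section PlaneGeometry.
Variable K : fieldType.
Local Notation vec := {ffun 'I_3 -> K}.

Lemma eq_vec3 (x y : vec) : x ord0 = y ord0 -> x i1 = y i1 -> x i2 = y i2 -> x = y.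
Proof. by move=> e0 e1 e2; rewrite -[x]vec3_coords -[y]vec3_coords e0 e1 e2. Qed.

Lemma dotC (x y : vec) : dot x y = dot y x.
Proof. vec_ring. Qed.

Lemma dotDr (x y z : vec) : dot x (y + z) = dot x y + dot x z.
Proof. vec_ring. Qed.

Lemma dot_scalev (x y : vec) a : dot x (scalev a y) = a * dot x y.
Proof. vec_ring. Qed.

Lemma dot_crossl (x y : vec) : dot x (cross x y) = 0.
Proof. vec_ring. Qed.

Lemma dot_crossr (x y : vec) : dot y (cross x y) = 0.
Proof. vec_ring. Qed.

Lemma cross_cross (x a b : vec) :
  cross x (cross a b) = scalev (dot x b) a - scalev (dot x a) b.
Proof. by apply: eq_vec3; rewrite !ffunE /=; vec_ring. Qed.

Lemma normalizedE (x : vec) : normalized x =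
  [|| x ord0 == 1, (x ord0 == 0) && (x i1 == 1)
    | [&& x ord0 == 0, x i1 == 0 & x i2 == 1]].
Proof.
have e1 : inord 1 = i1 by apply/val_inj; rewrite /= inordK.
have e2 : inord 2 = i2 by apply/val_inj; rewrite /= inordK.
by rewrite /normalized e1 e2.
Qed.

Lemma normalized_neq0 (x : vec) : normalized x -> x != 0.
Proof.
rewrite normalizedE; apply: contraL => /eqP->; rewrite !ffunE eqxx.
by rewrite eq_sym oner_eq0.
Qed.

Lemma normalized_scalev_eq (x y : vec) a :
  normalized x -> normalized y -> x = scalev a y -> x = y.
Proof.
move=> nx ny x_eq; suff a1 : a = 1.
  by rewrite x_eq a1; apply/ffunP => i; rewrite ffunE mul1r.
have xE i : x i = a * y i by rewrite x_eq ffunE.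
move: nx ny; rewrite !normalizedE !xE => nx.
case/or3P => [/eqP y0|/andP[/eqP y0 /eqP y1]|/and3P[/eqP y0 /eqP y1 /eqP y2]];
  move: nx; rewrite ?y0 ?y1 ?y2 ?mulr0 ?mulr1 ?eqxx ?oner_eq0 /= ?andbF ?andbT ?orbF.
- case/or3P => [/eqP //|/andP[/eqP a0 h]|/and3P[/eqP a0 _ h]];
    by rewrite a0 mul0r eq_sym oner_eq0 in h.
- rewrite (eq_sym 0 1) oner_eq0 /=; case/orP => [/eqP //|/andP[/eqP a0 h]].
  by rewrite a0 mul0r eq_sym oner_eq0 in h.
- by rewrite (eq_sym 0 1) oner_eq0 /= => /eqP.
Qed.

Lemma normalizable (x : vec) : x != 0 -> exists2 r, r != 0 & normalized (scalev r x).
Proof.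
move=> x_neq0.
have [x0|x0] := eqVneq (x ord0) 0; last first.
  by exists (x ord0)^-1; rewrite ?invr_eq0 // normalizedE ffunE mulVf ?eqxx.
have [x1|x1] := eqVneq (x i1) 0; last first.
  by exists (x i1)^-1; rewrite ?invr_eq0 // normalizedE !ffunE x0 mulr0 mulVf ?eqxx ?orbT.
have [x2|x2] := eqVneq (x i2) 0.
  by case/eqP: x_neq0; apply: eq_vec3; rewrite ffunE.
by exists (x i2)^-1; rewrite ?invr_eq0 // normalizedE !ffunE x0 x1 mulr0 mulVf ?eqxx ?orbT.
Qed.

Lemma cross_eq0_scalev (x y : vec) : y != 0 -> cross x y = 0 -> exists a, x = scalev a y.
Proof.
move=> y_neq0 /ffunP xy0.
have minor i j : x i * y j = x j * y i.
  have /eqP := xy0 ord0; have /eqP := xy0 i1; have /eqP := xy0 i2.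
  rewrite !ffunE /= !subr_eq0 => /eqP m01 /eqP m20 /eqP m12.
  by case: (ord3P i) => ->; case: (ord3P j) => ->.
have [j yj] : exists j, y j != 0.
  apply/existsP; apply: contraR y_neq0; rewrite negb_exists => /forallP y0.
  by apply/eqP/ffunP => k; rewrite ffunE; apply/eqP; rewrite -[_ == _]negbK y0.
by exists (x j / y j); apply/ffunP => i; rewrite ffunE mulrAC -minor mulfK.
Qed.

Lemma orthogonal_cross (a b x : vec) : dot a x = 0 -> dot b x = 0 ->
  cross a b != 0 -> exists r, x = scalev r (cross a b).
Proof.
move=> ax bx ab_neq0; apply: cross_eq0_scalev ab_neq0 _.
by rewrite cross_cross dotC bx dotC ax; apply/ffunP => i; rewrite !ffunE !mul0r subrr.
Qed.

Lemma det_concurrent_lines_neq0 (a b Q L : vec) :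
  normalized a -> normalized b -> a != b -> normalized Q ->
  dot a Q = 0 -> dot b Q = 0 -> dot L Q != 0 -> det a L b != 0.
Proof.
move=> na nb ab nQ aQ bQ LQ.
have ab_neq0 : cross a b != 0.
  apply: contra ab => /eqP /(cross_eq0_scalev (normalized_neq0 nb)) [r a_eq].
  by rewrite (normalized_scalev_eq na nb a_eq).
have [r Q_eq] := orthogonal_cross aQ bQ ab_neq0.
have -> : det a L b = - dot L (cross a b) by vec_ring.
by apply: contra LQ; rewrite oppr_eq0 Q_eq dot_scalev => /eqP->; rewrite mulr0.
Qed.

Lemma point_on_line_param (l L Q P : vec) :
  dot l Q = 0 -> dot L Q != 0 -> dot l P = 0 -> dot L P != 0 -> cross l L != 0 ->
  exists r s, r != 0 /\ P = scalev r (Q + scalev s (cross l L)).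
Proof.
move=> lQ LQ lP LP lL_neq0.
set k := dot L Q in LQ *; set m := dot L P in LP *.
pose X := scalev k P - scalev m Q.
have dotX u : dot u X = k * dot u P - m * dot u Q by vec_ring.
have lX : dot l X = 0 by rewrite dotX lP lQ !mulr0 subrr.
have LX : dot L X = 0 by rewrite dotX -/k -/m mulrC subrr.
have [mu X_eq] := orthogonal_cross lX LX lL_neq0.
exists (m / k), (mu / m); split; first by rewrite mulf_neq0 ?invr_eq0.
set d := cross l L in X_eq *; clearbody d.
apply/ffunP => i; have := congr1 (fun f : vec => f i) X_eq; rewrite !ffunE => e.
have -> : m / k * (Q i + mu / m * d i) = (m * Q i + mu * d i) / k.
  by field; apply/andP.
by rewrite -e; field.
Qed.

Lemma meval_scalev_homog (F : {mpoly K[3]}) d a (x : vec) :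
  F \is d.-homog -> F.@[scalev a x] = a ^+ d * F.@[x].
Proof.
move=> F_homog; rewrite !mevalE mulr_sumr; apply: eq_big_seq => m m_supp.
rewrite mulrCA; congr (_ * _); under eq_bigr do rewrite ffunE exprMn.
by rewrite big_split /= prodrXr -mdegE (dhomog_mf F_homog m_supp).
Qed.

End PlaneGeometry.

Section AffinePlaneRestriction.
Variable K : fieldType.
Local Notation vec := {ffun 'I_3 -> K}.

Definition mnm2 (a b : nat) : 'X_{1..2} := [multinom (if i == ord0 then a else b) | i < 2].

Lemma mnm2_0 a b : mnm2 a b ord0 = a. Proof. by rewrite mnmE. Qed.
Lemma mnm2_1 a b : mnm2 a b ord_max = b. Proof. by rewrite mnmE. Qed.

Lemma ord2P (i : 'I_2) : i = ord0 \/ i = ord_max.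
Proof. by case: i => [[|[|k]] hk]; [left|right|by []]; exact/val_inj. Qed.

Lemma mnm2_eq a b (m : 'X_{1..2}) : (mnm2 a b == m) = (a == m ord0) && (b == m ord_max).
Proof.
apply/eqP/andP => [<-|[/eqP-> /eqP->]]; first by rewrite mnm2_0 mnm2_1.
by apply/mnmP => i; case: (ord2P i) => ->; rewrite ?mnm2_0 ?mnm2_1.
Qed.

Lemma mdeg2 (m : 'X_{1..2}) : mdeg m = (m ord0 + m ord_max)%N.
Proof. by rewrite mdegE big_ord_recr big_ord1; congr (m _ + m _); apply/val_inj. Qed.

Lemma mpoly2E (P : {mpoly K[2]}) n : (msize P <= n)%N ->
  P = \sum_(a < n) \sum_(b < n) P@_(mnm2 a b) *: 'X_[mnm2 a b].
Proof.
move=> sP; apply/mpolyP => m; rewrite raddf_sum /=.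
have coefE (a b : nat) : (P@_(mnm2 a b) *: 'X_[mnm2 a b])@_m =
    if b == m ord_max then (if a == m ord0 then P@_m else 0) else 0.
  rewrite mcoeffZ mcoeffX mnm2_eq.
  case: eqP => [eb|_]; case: eqP => [ea|_]; rewrite ?mulr0 //=.
  by rewrite mulr1; congr (P@_ _); apply/eqP; rewrite mnm2_eq ea eb !eqxx.
under eq_bigr => a _ do rewrite raddf_sum /=.
under eq_bigr => a _ do under eq_bigr => b _ do rewrite coefE.
under eq_bigr => a _ do
  rewrite -big_mkcond (big_ord1_eq _ (fun=> if (a == m ord0 :> nat) then P@_m else 0)).
have Pm_big : (n <= mdeg m)%N -> P@_m = 0.
  by move=> m_big; apply/eqP; rewrite mcoeff_eq0 (msize_mdeg_ge (leq_trans sP m_big)).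
rewrite -big_mkcond /=; case: (ltnP (m ord_max) n) => m1n; last first.
  by rewrite big_pred0 // Pm_big // mdeg2 (leq_trans m1n (leq_addl _ _)).
rewrite -big_mkcond (big_ord1_eq _ (fun=> P@_m)); case: ltnP => // m0n.
by rewrite Pm_big // mdeg2 (leq_trans m0n (leq_addr _ _)).
Qed.

Lemma meval2E (P : {mpoly K[2]}) n (x : 'I_2 -> K) : (msize P <= n)%N ->
  P.@[x] = \sum_(a < n) \sum_(b < n) P@_(mnm2 a b) * x ord0 ^+ a * x ord_max ^+ b.
Proof.
move=> sP; rewrite {1}(mpoly2E sP) raddf_sum; apply: eq_bigr => a _.
rewrite raddf_sum; apply: eq_bigr => b _.
rewrite /= mevalZ mevalX big_ord_recr big_ord1 mulrA mnm2_1.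
by rewrite (_ : widen_ord _ ord0 = ord0) ?mnm2_0 //; apply/val_inj.
Qed.

Lemma msizeM_affine (p r : {mpoly K[2]}) a b :
  (msize p <= a.+1)%N -> (msize r <= b.+1)%N -> (msize (p * r) <= (a + b).+1)%N.
Proof.
have [->|p_neq0] := eqVneq p 0; first by rewrite mul0r msize0.
have [->|r_neq0] := eqVneq r 0; first by rewrite mulr0 msize0.
by rewrite msizeM //; set u := msize p; set v := msize r; lia.
Qed.

Lemma msize_comp_affine (F : {mpoly K[3]}) (lq : 3.-tuple {mpoly K[2]}) :
  (forall i, msize (tnth lq i) <= 2)%N -> (msize (F \mPo lq) <= msize F)%N.
Proof.
move=> lq_affine; rewrite comp_mpolyEX.
apply: (leq_trans (msize_sum _ _ _)); apply/bigmax_leqP_seq => m m_supp _.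
rewrite (leq_trans (msizeZ_le _ _)) // comp_mpolyX.
apply: leq_trans (msize_mdeg_lt m_supp); rewrite mdegE.
elim/big_rec2: _ => [|i k r _ r_size]; first by rewrite msize1.
apply: msizeM_affine r_size; elim: (m i) => [|e e_size]; first by rewrite msize1.
by rewrite exprS; apply: msizeM_affine (lq_affine i) e_size.
Qed.

Lemma msize_dhomog_le n (F : {mpoly K[n]}) d : F \is d.-homog -> (msize F <= d.+1)%N.
Proof.
by move=> F_homog; rewrite msizeE; apply/bigmax_leqP_seq => m /(dhomog_mf F_homog) ->.
Qed.

Definition affine_param (x u w : vec) : 3.-tuple {mpoly K[2]} :=
  [tuple (x i)%:MP + u i *: 'X_ord0 + w i *: 'X_ord_max | i < 3].

Lemma msize_affine_param x u w i : (msize (tnth (affine_param x u w) i) <= 2)%N.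
Proof.
have sX (c : K) j : (msize (c *: 'X_j : {mpoly K[2]}) <= 2)%N.
  by rewrite (leq_trans (msizeZ_le _ _)) // msizeX mdeg1.
rewrite tnth_mktuple (leq_trans (msizeD_le _ _)) // geq_max sX andbT.
by rewrite (leq_trans (msizeD_le _ _)) // geq_max sX msizeC; case: (x i != 0).
Qed.

Lemma meval_affine_param (F : {mpoly K[3]}) x u w (v : 'I_2 -> K) :
  (F \mPo affine_param x u w).@[v] = F.@[x + scalev (v ord0) u + scalev (v ord_max) w].
Proof.
rewrite comp_mpoly_meval; apply: meval_eq => i.
by rewrite tnth_mktuple !mevalD mevalC !mevalZ !mevalXU !ffunE ![_ * v _]mulrC.
Qed.

Lemma restriction_to_plane (F : {mpoly K[3]}) n (x u w : vec) : (msize F <= n)%N ->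
  exists p : nat -> nat -> K, (forall a b, (n <= a + b)%N -> p a b = 0) /\
    forall s v, F.@[x + scalev s u + scalev v w] =
      \sum_(a < n) \sum_(b < n) p a b * s ^+ a * v ^+ b.
Proof.
move=> sF; pose G := F \mPo affine_param x u w.
have sG : (msize G <= n)%N.
  exact: leq_trans (msize_comp_affine _ (msize_affine_param x u w)) sF.
exists (fun a b => G@_(mnm2 a b)); split.
  move=> a b ab_big; apply/eqP; rewrite mcoeff_eq0 msize_mdeg_ge //.
  by rewrite mdeg2 mnm2_0 mnm2_1 (leq_trans sG).
move=> s v; pose sv (i : 'I_2) := if i == ord0 then s else v.
by rewrite -[s]/(sv ord0) -[v]/(sv ord_max) -meval_affine_param (meval2E _ sG).
Qed.

End AffinePlaneRestriction.

Section PencilThroughQ0.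
Variable K : finFieldType.
Local Notation q := #|K|.
Local Notation vec := {ffun 'I_3 -> K}.

Variables (F : {mpoly K[3]}) (Q0 linf l : vec) (t : nat) (ls : 'I_t -> vec).
Hypothesis F_homog : F \is q.-1.-homog.
Hypothesis nQ0 : normalized Q0.
Hypothesis Q0_off_curve : ~~ onCurve F Q0.
Hypothesis Q0_off_linf : ~~ onLine linf Q0.
Hypothesis t_gt0 : (0 < t)%N.
Hypothesis t_small : (t <= q.-1)%N.
Hypothesis ls_inj : injective ls.
Hypothesis ls_through_Q0 : forall i, normalized (ls i) /\ onLine (ls i) Q0.
Hypothesis ls_in_curve : forall i (P : vec), normalized P -> onLine (ls i) P ->
  P != Q0 -> ~~ onLine linf P -> P \in rat_points F.
Hypothesis nl : normalized l.
Hypothesis l_through_Q0 : onLine l Q0.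
Hypothesis l_new : forall i, l != ls i.

Let k := dot linf Q0.
Let i0 := Ordinal t_gt0.
Let dl := cross l linf.
Let d1 := cross (ls i0) linf.

Let k_neq0 : k != 0. Proof. exact: Q0_off_linf. Qed.
Let lQ0 : dot l Q0 = 0. Proof. exact/eqP. Qed.
Let nls i : normalized (ls i). Proof. by case: (ls_through_Q0 i). Qed.
Let lsQ0 i : dot (ls i) Q0 = 0. Proof. by apply/eqP; case: (ls_through_Q0 i). Qed.

Let ls_dl i : dot (ls i) dl != 0.
Proof.
rewrite dotC -/(det l linf (ls i)).
exact: det_concurrent_lines_neq0 nl (nls i) (l_new i) nQ0 lQ0 (lsQ0 i) k_neq0.
Qed.

Let l_d1 : dot l d1 != 0.
Proof.
rewrite dotC -/(det (ls i0) linf l).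
by apply: det_concurrent_lines_neq0 nQ0 (lsQ0 i0) lQ0 k_neq0; rewrite // eq_sym l_new.
Qed.

Let dl_neq0 : dl != 0.
Proof. by apply: contra (ls_dl i0) => /eqP->; rewrite dotE !ffunE !mulr0 !addr0. Qed.

Let F_scalev_eq0 r x : r != 0 -> (F.@[scalev r x] == 0) = (F.@[x] == 0).
Proof.
move=> r_neq0; rewrite (meval_scalev_homog _ _ F_homog).
by rewrite mulf_eq0 expf_eq0 (negbTE r_neq0) andbF.
Qed.

(* In the chart (s, v) |-> Q0 + s dl + v d1, the line ls i is s = slope i * v. *)
Definition slope i := - dot (ls i) d1 / dot (ls i) dl.

Lemma slope_inj : injective slope.
Proof.
move=> i j; rewrite /slope => /eqP; rewrite eqr_div ?ls_dl // !mulNr eqr_opp -subr_eq0.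
have -> : dot (ls i) d1 * dot (ls j) dl - dot (ls j) d1 * dot (ls i) dl =
          det (ls i0) linf l * det (ls i) linf (ls j).
  by rewrite /d1 /dl; vec_ring.
rewrite mulf_eq0 {1}/det -/d1 dotC (negbTE l_d1) /=.
apply: contraTeq => ij; apply: det_concurrent_lines_neq0 nQ0 (lsQ0 i) (lsQ0 j) k_neq0 => //.
by rewrite (inj_eq ls_inj).
Qed.

Lemma pencil_line_in_curve i v : v != 0 ->
  F.@[Q0 + scalev (slope i * v) dl + scalev v d1] = 0.
Proof.
move=> v_neq0; set X := Q0 + _ + _.
have dotX u : dot u X = dot u Q0 + slope i * v * dot u dl + v * dot u d1.
  by rewrite /X !dotDr !dot_scalev.
have lsX : dot (ls i) X = 0.
  by rewrite dotX lsQ0 /slope; field; apply: ls_dl.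
have linfX : dot linf X = k by rewrite dotX /dl /d1 !dot_crossr !mulr0 !addr0.
have lX : dot l X = v * dot l d1 by rewrite dotX lQ0 /dl dot_crossl mulr0 addr0 add0r.
have X_neq0 : X != 0.
  by apply: contra k_neq0 => /eqP X0; rewrite -linfX X0 dotE !ffunE !mulr0 !addr0.
have [r r_neq0 nX] := normalizable X_neq0.
have : scalev r X \in rat_points F.
  apply: (ls_in_curve (i := i) nX).
  - by rewrite onLineE dot_scalev lsX mulr0.
  - apply: contra_neq (mulf_neq0 r_neq0 (mulf_neq0 v_neq0 l_d1)) => rX_eq.
    by rewrite -lX -dot_scalev rX_eq.
  - by rewrite onLineE dot_scalev linfX mulf_neq0.
by rewrite inE /onCurve F_scalev_eq0 // => /andP[_ /eqP].
Qed.

(* Reads off s from P = r (Q0 + s dl) with the line ls i0, which meets l only at Q0. *)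
Definition l_coord (P : vec) : K := k * dot (ls i0) P / (dot (ls i0) dl * dot linf P).

Lemma l_param P : onLine l P -> ~~ onLine linf P ->
  exists2 r, r != 0 & P = scalev r (Q0 + scalev (l_coord P) dl).
Proof.
move=> lP linfP.
have [r [s [r_neq0 P_eq]]] := point_on_line_param lQ0 k_neq0 (eqP lP) linfP dl_neq0.
exists r => //; suff -> : l_coord P = s by [].
have linf_dl : dot linf dl = 0 by apply: dot_crossr.
rewrite /l_coord P_eq !dot_scalev !dotDr !dot_scalev lsQ0 linf_dl -/k mulr0 addr0 add0r.
by field; rewrite r_neq0 k_neq0 ls_dl.
Qed.

Lemma l_coord_eq0 P : normalized P -> onLine l P -> ~~ onLine linf P ->
  l_coord P = 0 -> P = Q0.
Proof.
move=> nP lP linfP c0; have [r _ P_eq] := l_param lP linfP.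
apply: (normalized_scalev_eq (a := r) nP nQ0).
by rewrite P_eq c0; apply/ffunP => i; rewrite !ffunE mul0r addr0.
Qed.

Lemma many_axis_roots :
  (q - t <= #|[set P in rat_points F | onLine l P && ~~ onLine linf P]|)%N ->
  (q - t <= #|[set s : K | (s != 0) && (F.@[Q0 + scalev s dl] == 0)]%R|)%N.
Proof.
move=> many; apply: leq_trans many _.
set S := [set P in rat_points F | _].
have coord_inj : {in S &, injective l_coord}.
  move=> P P'; rewrite !inE => /andP[/andP[nP _] /andP[lP linfP]].
  move=> /andP[/andP[nP' _] /andP[lP' linfP']] e.
  have [r _ P_eq] := l_param lP linfP; have [r' r'_neq0 P'_eq] := l_param lP' linfP'.
  apply: (normalized_scalev_eq (a := r / r') nP nP').
  by rewrite P_eq P'_eq e; apply/ffunP => i; rewrite !ffunE mulrA divfK.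
rewrite -(card_in_imset coord_inj); apply/subset_leq_card/subsetP => _ /imsetP[P PS ->].
move: PS; rewrite !inE => /andP[/andP[nP FP] /andP[lP linfP]].
have [r r_neq0 P_eq] := l_param lP linfP.
apply/andP; split; last by rewrite -(F_scalev_eq0 _ r_neq0) -P_eq.
apply: contraNneq Q0_off_curve => /(l_coord_eq0 nP lP linfP) <-; exact: FP.
Qed.

Let F_size : (msize F <= q)%N.
Proof. by rewrite -(ltn_predK (finNzRing_gt1 K)); apply: msize_dhomog_le. Qed.

Theorem affine_line_in_curve :
  (q - t <= #|[set P in rat_points F | onLine l P && ~~ onLine linf P]|)%N ->
  forall P : vec, normalized P -> onLine l P -> P != Q0 -> ~~ onLine linf P ->
    P \in rat_points F.
Proof.
move=> many P nP lP PQ0 linfP.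
have [p [p_deg p_eval]] := restriction_to_plane Q0 dl d1 F_size.
have on_l s : F.@[Q0 + scalev s dl] = \sum_(a < q) p a 0%N * s ^+ a.
  have := p_eval s 0; rewrite (_ : scalev 0 d1 = 0) ?addr0; last first.
    by apply/ffunP => i; rewrite !ffunE mul0r.
  move=> ->; apply: eq_bigr => a _.
  exact: (sum_mul_expr0 (fun b => p a b * s ^+ a) (ltnW (finNzRing_gt1 K))).
have on_ls i v : v != 0 ->
    \sum_(a < q) \sum_(b < q) p a b * (slope i * v) ^+ a * v ^+ b = 0.
  by move=> v_neq0; rewrite -p_eval pencil_line_in_curve.
have roots : (q - t <= #|[set s : K | (s != 0) && (\sum_(a < q) p a 0%N * s ^+ a == 0)]%R|)%N.
  by under eq_finset => s do rewrite -on_l; apply: many_axis_roots.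
have [r r_neq0 P_eq] := l_param lP linfP.
have coord_neq0 : l_coord P != 0 := contra_neq (l_coord_eq0 nP lP linfP) PQ0.
rewrite inE nP /onCurve P_eq F_scalev_eq0 // on_l.
by rewrite (axis_vanishing_of_lines t_small slope_inj p_deg on_ls roots) ?eqxx.
Qed.

End PencilThroughQ0.

Theorem proposition3p8 (K : finFieldType) (q : nat) (F : {mpoly K[3]})
  (Q0 linf : {ffun 'I_3 -> K}) (t : nat) (ls : 'I_t -> {ffun 'I_3 -> K})
  (l : {ffun 'I_3 -> K}) :
  #|K| = q -> (5 <= q)%N ->
  plane_curve (q.-1) F -> no_rational_linear_component F ->
  Nq F = (q.-1 ^ 2)%N ->
  normalized Q0 -> ~~ onCurve F Q0 ->
  normalized linf -> ~~ onLine linf Q0 ->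
  (2 <= t)%N -> (t <= q.-1)%N ->
  injective ls ->
  (forall i, normalized (ls i) /\ onLine (ls i) Q0) ->
  (forall i (P : {ffun 'I_3 -> K}), normalized P -> onLine (ls i) P ->
      P != Q0 -> ~~ onLine linf P -> P \in rat_points F) ->
  normalized l -> onLine l Q0 -> (forall i, l != ls i) ->
  (q - t <= #|[set P in rat_points F | onLine l P && ~~ onLine linf P]|)%N ->
  forall P : {ffun 'I_3 -> K}, normalized P -> onLine l P ->
    P != Q0 -> ~~ onLine linf P -> P \in rat_points F.
Proof.
move=> <- _ [_ F_homog] _ _ nQ0 Q0_off_curve _ Q0_off_linf t_ge2 t_small.
exact: (affine_line_in_curve F_homog nQ0 Q0_off_curve Q0_off_linf (ltnW t_ge2) t_small).
Qed.
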